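(* Let $a,b,c,d\ge0$ with $a+b+c+d=1$, and let $$C=\begin{pmatrix}a&b&c&d\\ d&a&b&c\\ c&d&a&b\\ b&c&d&a\end{pmatrix}.$$ If $C$ is bracelet, then $C$ is unistochastic.
   Context: A bistochastic $N\times N$ matrix $B$ (nonnegative entries, all row and column sums equal to 1) is bracelet if for all $k,l\in\{1,\dots,N\}$ both $2\max_j\sqrt{B_{lj}B_{kj}}\le\sum_{j=1}^N\sqrt{B_{lj}B_{kj}}$ and $2\max_j\sqrt{B_{jk}B_{jl}}\le\sum_{j=1}^N\sqrt{B_{jk}B_{jl}}$. It is unistochastic if there is a unitary $U$ with $B_{ij}=|U_{ij}|^2$ for all $i,j$. *)

From HB Require Import structures.
From mathcomp Require Import all_boot all_order all_algebra.
From mathcomp Require Import complex.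
From mathcomp Require Import Rstruct.
From Stdlib Require Import Reals.
Set Implicit Arguments. Unset Strict Implicit. Unset Printing Implicit Defensive.
Import Order.TTheory GRing.Theory Num.Theory.
Local Open Scope ring_scope.

Definition bistochastic (N : nat) (B : 'M[R]_N) : Prop :=
  (forall i j, 0 <= B i j) /\
  (forall i, \sum_(j < N) B i j = 1) /\
  (forall j, \sum_(i < N) B i j = 1).

Definition bracelet (N : nat) (B : 'M[R]_N) : Prop :=
  bistochastic B /\
  forall k l : 'I_N,
    2 * \big[Num.max/0]_(j < N) Num.sqrt (B l j * B k j)
      <= \sum_(j < N) Num.sqrt (B l j * B k j) /\
    2 * \big[Num.max/0]_(j < N) Num.sqrt (B j k * B j l)
      <= \sum_(j < N) Num.sqrt (B j k * B j l).

Definition sqmod (z : R[i]) : R := let: Complex x y := z in x ^+ 2 + y ^+ 2.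

Definition unitary (N : nat) (U : 'M[R[i]]_N) : Prop :=
  U *m (map_mx conjc U)^T = 1%:M.

Definition unistochastic (N : nat) (B : 'M[R]_N) : Prop :=
  exists U : 'M[R[i]]_N, unitary U /\ forall i j, B i j = sqmod (U i j).

Definition circ4 (a b c d : R) : 'M[R]_4 :=
  \matrix_(i < 4, j < 4) nth 0 [:: a; b; c; d] (modn (subn (addn (val j) 4) (val i)) 4).

From mathcomp Require Import all_boot all_order all_algebra.
From mathcomp Require Import complex Rstruct.
From Stdlib Require Import Reals.
From mathcomp Require Import ring lra.
Set Implicit Arguments. Unset Strict Implicit. Unset Printing Implicit Defensive.
Import Order.TTheory GRing.Theory Num.Theory.
Local Open Scope ring_scope.
Local Open Scope complex_scope.

(* A circulant matrix with first row (z0, z1, z2, z3) is unitary iff that row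
   is orthonormal to its cyclic shifts.  Prescribing z2 z0^* = M + iH and
   z3 z1^* = -M + iJ, with M^2 + H^2 = ac and M^2 + J^2 = bd, makes the shift
   by 2 vanish.  Multiplying z1 and z3 by a unit w turns the shift by 1 into
   w X + w^* Y, where X = z1 z0^* + z3 z2^* and Y = z2 z1^* + z0 z3^*; a
   suitable w exists iff |X| = |Y|, which amounts to
   4HJ = -(a - c)(b - d).  Such M, H, J exist iff
   ((a - c)(b - d)/4)^2 <= abcd, and this is what the bracelet condition for
   the first two rows gives: the four products sqrt(da), sqrt(ab), sqrt(bc),
   sqrt(cd) satisfy the quadrilateral inequalities. *)

(* [circ4 a b c d] is convertible to [circulant4 a b c d]. *)
Definition circulant4 (T : nmodType) (s0 s1 s2 s3 : T) : 'M[T]_4 :=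
  \matrix_(i < 4, j < 4) nth 0 [:: s0; s1; s2; s3] (modn (subn (addn j 4) i) 4).

Lemma map_circulant4 (T U : nmodType) (f : T -> U) (s0 s1 s2 s3 : T) :
  map_mx f (circulant4 s0 s1 s2 s3) = circulant4 (f s0) (f s1) (f s2) (f s3).
Proof.
apply/matrixP => i j; rewrite !mxE.
by case: (modn _ 4) (ltn_pmod (subn (addn j 4) i) (ltn0Sn 3)) => [|[|[|[|]]]].
Qed.

(* Rewriting with [rmorphM] and friends leaves the bundled morphism in place
   of [conjc]; these specialisations avoid that. *)
Lemma conjcM (y z : R[i]) : conjc (y * z) = conjc y * conjc z.
Proof. exact: rmorphM. Qed.

Lemma conjcD (y z : R[i]) : conjc (y + z) = conjc y + conjc z.
Proof. exact: rmorphD. Qed.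

Lemma conjcB (y z : R[i]) : conjc (y - z) = conjc y - conjc z.
Proof. exact: rmorphB. Qed.

Lemma sqmod_complex (x y : R) : sqmod (x +i* y) = x ^+ 2 + y ^+ 2.
Proof. by []. Qed.

Lemma sqmodE (z : R[i]) : (sqmod z)%:C = z * conjc z.
Proof. by case: z => x y; simpc; rewrite sqmod_complex; congr (_ +i* _); ring. Qed.

Lemma sqmod_ge0 (z : R[i]) : 0 <= sqmod z.
Proof. by case: z => x y; rewrite sqmod_complex addr_ge0 ?sqr_ge0. Qed.

Lemma sqmod_eq0 (z : R[i]) : (sqmod z == 0) = (z == 0).
Proof.
case: z => x y; rewrite sqmod_complex eq_complex /= paddr_eq0 ?sqr_ge0 //.
by rewrite !sqrf_eq0.
Qed.

Lemma sqmodM (y z : R[i]) : sqmod (y * z) = sqmod y * sqmod z.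
Proof. by case: y z => [x1 y1] [x2 y2]; simpc; rewrite !sqmod_complex; ring. Qed.

Lemma sqmodR (x : R) : sqmod x%:C = x ^+ 2.
Proof. by rewrite sqmod_complex; ring. Qed.

(* The shift by 3 is the conjugate of the shift by 1. *)
Lemma circulant4_unitary (z0 z1 z2 z3 : R[i]) :
  z0 * conjc z0 + z1 * conjc z1 + z2 * conjc z2 + z3 * conjc z3 = 1 ->
  z1 * conjc z0 + z2 * conjc z1 + z3 * conjc z2 + z0 * conjc z3 = 0 ->
  z2 * conjc z0 + z3 * conjc z1 + z0 * conjc z2 + z1 * conjc z3 = 0 ->
  unitary (circulant4 z0 z1 z2 z3).
Proof.
case: z0 z1 z2 z3 => [x0 y0] [x1 y1] [x2 y2] [x3 y3]; simpc.
move=> /eqP; rewrite eq_complex /= => /andP[/eqP H0 _].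
move=> /eqP; rewrite eq_complex /= => /andP[/eqP H1 /eqP H2].
move=> /eqP; rewrite eq_complex /= => /andP[/eqP H3 _].
apply/matrixP => i k; rewrite !mxE !big_ord_recr big_ord0 /= !mxE.
case: i => [[|[|[|[|i]]]] Hi] //; case: k => [[|[|[|[|k]]]] Hk] //=.
all: simpc; apply/eqP; rewrite eq_complex /=; apply/andP; split; apply/eqP.
all: lra.
Qed.

Lemma rescale_to_unit (z : R[i]) : z != 0 -> exists t : R, sqmod (t%:C * z) = 1.
Proof.
rewrite -sqmod_eq0 => z_neq0.
have z_gt0 : 0 < sqmod z by rewrite lt0r z_neq0 sqmod_ge0.
exists (Num.sqrt (sqmod z))^-1.
by rewrite sqmodM sqmodR exprVn sqr_sqrtr ?mulVf // ltW.
Qed.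

Lemma balancing_unit (X Y : R[i]) : sqmod X = sqmod Y ->
  exists2 w : R[i], sqmod w = 1 & w * X + conjc w * Y = 0.
Proof.
move=> XY; have XYc : X * conjc X = Y * conjc Y by rewrite -!sqmodE XY.
suff [z z_neq0 hz] : exists2 z, z != 0 & z * X + conjc z * Y = 0.
  have [t ht] := rescale_to_unit z_neq0.
  exists (t%:C * z) => //.
  by rewrite conjcM conjc_real -mulrA -mulrA -mulrDr hz mulr0.
have [X0 | X_neq0] := eqVneq X 0.
  have Y0 : Y = 0 by apply/eqP; rewrite -sqmod_eq0 -XY X0 sqmod_eq0.
  by exists 1; rewrite ?oner_neq0 // X0 Y0 !mulr0 addr0.
have [YXc | YXc_neq] := eqVneq Y (conjc X).
  exists ('i * conjc X); first by rewrite mulf_neq0 ?conjc_eq0 ?neq0Ci.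
  have conj_i : conjc 'i = - 'i :> R[i].
    by apply/eqP; rewrite eq_complex /= oppr0 !eqxx.
  by rewrite conjcM conjcK conj_i YXc; ring.
exists (conjc X - Y); first by rewrite subr_eq0 eq_sym.
rewrite conjcB conjcK.
transitivity (X * conjc X - Y * conjc Y); first ring.
by rewrite XYc subrr.
Qed.

Lemma circulant4_unitary_rotate (z0 z1 z2 z3 : R[i]) :
  z0 * conjc z0 + z1 * conjc z1 + z2 * conjc z2 + z3 * conjc z3 = 1 ->
  z2 * conjc z0 + z3 * conjc z1 + z0 * conjc z2 + z1 * conjc z3 = 0 ->
  sqmod (z1 * conjc z0 + z3 * conjc z2) = sqmod (z2 * conjc z1 + z0 * conjc z3) ->
  exists2 w, sqmod w = 1 & unitary (circulant4 z0 (w * z1) z2 (w * z3)).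
Proof.
move=> rho0 rho2 /balancing_unit[w w1 rho1].
have ww : w * conjc w = 1 by rewrite -sqmodE w1.
exists w => //; apply: circulant4_unitary; rewrite !conjcM.
- rewrite -rho0; transitivity (z0 * conjc z0 + (w * conjc w) * (z1 * conjc z1)
    + z2 * conjc z2 + (w * conjc w) * (z3 * conjc z3)); first ring.
  by rewrite ww !mul1r.
- by rewrite -rho1; ring.
- rewrite -rho2; transitivity (z2 * conjc z0 + (w * conjc w) * (z3 * conjc z1)
    + z0 * conjc z2 + (w * conjc w) * (z1 * conjc z3)); first ring.
  by rewrite ww !mul1r.
Qed.

Lemma circulant4_unitary_of_products (z0 z1 z2 z3 : R[i]) (M H J : R) :
  sqmod z0 + sqmod z1 + sqmod z2 + sqmod z3 = 1 ->
  z2 * conjc z0 = M +i* H -> z3 * conjc z1 = (- M) +i* J ->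
  4 * (H * J) = (sqmod z2 - sqmod z0) * (sqmod z1 - sqmod z3) ->
  exists2 w, sqmod w = 1 & unitary (circulant4 z0 (w * z1) z2 (w * z3)).
Proof.
move=> sum1 u_def v_def HJ.
have u'_def : z0 * conjc z2 = M -i* H by rewrite -[z0]conjcK -conjcM mulrC u_def.
have v'_def : z1 * conjc z3 = (- M) -i* J by rewrite -[z1]conjcK -conjcM mulrC v_def.
apply: circulant4_unitary_rotate.
- by rewrite -!sqmodE -!rmorphD sum1.
- rewrite u_def v_def u'_def v'_def; simpc.
  by rewrite (_ : H + J - H - J = 0) //; ring.
- apply/complexI/eqP; rewrite !sqmodE !conjcD !conjcM !conjcK -subr_eq0.
  set d := (X in X == 0).
  have -> : d = (z0 * conjc z0 - z2 * conjc z2) * (z1 * conjc z1 - z3 * conjc z3)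
    - (z2 * conjc z0 - z0 * conjc z2) * (z3 * conjc z1 - z1 * conjc z3) by rewrite /d; ring.
  rewrite -!sqmodE u_def v_def u'_def v'_def; simpc.
  have -> : (H + H) * (J + J) = 4 * (H * J) by ring.
  by rewrite HJ -mulrDl addrC subrKA subrr mul0r.
Qed.

Lemma factor_mul_conjc (a c : R) (u : R[i]) : 0 <= a -> 0 <= c -> sqmod u = a * c ->
  exists z0 z2, [/\ sqmod z0 = a, sqmod z2 = c & z2 * conjc z0 = u].
Proof.
move=> a_ge0 c_ge0 hu; have [a0 | a_neq0] := eqVneq a 0.
  have u0 : u = 0 by apply/eqP; rewrite -sqmod_eq0 hu a0 mul0r.
  exists 0, (Num.sqrt c)%:C; split; last by rewrite u0 rmorph0 mulr0.
  - by rewrite a0; apply/eqP; rewrite sqmod_eq0.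
  - by rewrite sqmodR sqr_sqrtr.
have s_gt0 : 0 < Num.sqrt a by rewrite sqrtr_gt0 lt0r a_neq0.
have s2 : Num.sqrt a ^+ 2 = a by rewrite sqr_sqrtr.
exists (Num.sqrt a)%:C, ((Num.sqrt a)^-1%:C * u); split.
- by rewrite sqmodR.
- by rewrite sqmodM sqmodR exprVn s2 hu mulKf.
- by rewrite conjc_real mulrAC -rmorphM mulVf ?mul1r // gt_eqF.
Qed.

Lemma split_with_shared_square (A B E : R) : 0 <= A -> 0 <= B -> E ^+ 2 <= A * B ->
  exists M H J : R, [/\ M ^+ 2 + H ^+ 2 = A, M ^+ 2 + J ^+ 2 = B & H * J = - E].
Proof.
move=> A_ge0 B_ge0 E_le.
set D := Num.sqrt ((A - B) ^+ 2 + 4 * E ^+ 2).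
have D2 : D ^+ 2 = (A - B) ^+ 2 + 4 * E ^+ 2.
  by rewrite sqr_sqrtr // addr_ge0 ?sqr_ge0 // mulr_ge0 ?sqr_ge0.
have D_ge0 : 0 <= D by apply: sqrtr_ge0.
have D_le : D <= A + B by nra.
have D_ge : `|A - B| <= D.
  by rewrite -sqrtr_sqr ler_wsqrtr // lerDl mulr_ge0 ?sqr_ge0.
set m := (A + B - D) / 2.
have Am_ge0 : 0 <= A - m by move: D_ge; rewrite ler_norml /m; lra.
have Bm_ge0 : 0 <= B - m by move: D_ge; rewrite ler_norml /m; lra.
have m_ge0 : 0 <= m by rewrite /m; lra.
have HJ : Num.sqrt (A - m) * Num.sqrt (B - m) = `|E|.
  rewrite -sqrtrM // -sqrtr_sqr; congr Num.sqrt; rewrite /m.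
  transitivity ((D ^+ 2 - (A - B) ^+ 2) / 4); first by field.
  by rewrite D2; field.
exists (Num.sqrt m), (Num.sqrt (A - m)).
have [E_ge0 | E_lt0] := lerP 0 E.
- exists (- Num.sqrt (B - m)); rewrite sqrrN !sqr_sqrtr //.
  by split; [ring | ring | rewrite mulrN HJ ger0_norm].
- exists (Num.sqrt (B - m)); rewrite !sqr_sqrtr //.
  by split; [ring | ring | rewrite HJ ltr0_norm].
Qed.

Lemma quadrilateral_bound (p q r s : R) :
  0 <= p -> 0 <= q -> 0 <= r -> 0 <= s ->
  let S := s * p + p * q + q * r + r * s in
  2 * (s * p) <= S -> 2 * (p * q) <= S -> 2 * (q * r) <= S -> 2 * (r * s) <= S ->
  `|(p ^+ 2 - r ^+ 2) * (q ^+ 2 - s ^+ 2)| <= 4 * (p * q * (r * s)).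
Proof.
move=> p_ge0 q_ge0 r_ge0 s_ge0 S sp_le pq_le qr_le rs_le.
rewrite ler_norml; apply/andP; split; rewrite -subr_ge0 ?opprK.
- have -> : (p ^+ 2 - r ^+ 2) * (q ^+ 2 - s ^+ 2) + 4 * (p * q * (r * s))
    = (S - 2 * (s * p)) * (S - 2 * (q * r)) by rewrite /S; ring.
  by apply: mulr_ge0; rewrite subr_ge0.
- have -> : 4 * (p * q * (r * s)) - (p ^+ 2 - r ^+ 2) * (q ^+ 2 - s ^+ 2)
    = (S - 2 * (p * q)) * (S - 2 * (r * s)) by rewrite /S; ring.
  by apply: mulr_ge0; rewrite subr_ge0.
Qed.

Lemma le_twice_bigmax n (F : 'I_n -> R) (S : R) :
  2 * \big[Num.max/0]_(j < n) F j <= S -> forall j, 2 * F j <= S.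
Proof. by move=> le_S j; apply: le_trans le_S; rewrite ler_pM2l ?le_bigmax. Qed.

Lemma circ4_bracelet_bound (a b c d : R) :
  0 <= a -> 0 <= b -> 0 <= c -> 0 <= d -> bracelet (circ4 a b c d) ->
  ((a - c) * (b - d) / 4) ^+ 2 <= (a * c) * (b * d).
Proof.
move=> ha hb hc hd [_ /(_ 0 1)[/le_twice_bigmax G _]].
have := G 0; have := G 1; have := G 2; have := G 3.
rewrite !big_ord_recr big_ord0 !mxE /= !sqrtrM // add0r => G3 G2 G1 G0.
have := quadrilateral_bound (sqrtr_ge0 a) (sqrtr_ge0 b) (sqrtr_ge0 c) (sqrtr_ge0 d) G0 G1 G2 G3.
rewrite !sqr_sqrtr // => bound.
have P_ge0 : 0 <= Num.sqrt a * Num.sqrt b * (Num.sqrt c * Num.sqrt d) by rewrite !mulr_ge0 ?sqrtr_ge0.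
have P2 : (Num.sqrt a * Num.sqrt b * (Num.sqrt c * Num.sqrt d)) ^+ 2 = a * c * (b * d).
  by rewrite !exprMn !sqr_sqrtr //; ring.
move: bound; rewrite ler_norml -P2 => /andP[lb ub]; nra.
Qed.

Theorem mainTheorem7 (a b c d : R) :
  0 <= a -> 0 <= b -> 0 <= c -> 0 <= d -> a + b + c + d = 1 ->
  bracelet (circ4 a b c d) -> unistochastic (circ4 a b c d).
Proof.
move=> ha hb hc hd sum1 /(circ4_bracelet_bound ha hb hc hd) E_le.
have [M [H [J [MH MJ HJ]]]] := split_with_shared_square (mulr_ge0 ha hc) (mulr_ge0 hb hd) E_le.
have [z0 [z2 [z0a z2c u_def]]] := @factor_mul_conjc a c (M +i* H) ha hc MH.
have MJ' : sqmod ((- M) +i* J) = b * d by rewrite sqmod_complex sqrrN.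
have [z1 [z3 [z1b z3d v_def]]] := factor_mul_conjc hb hd MJ'.
have [w w1 U_unitary] : exists2 w, sqmod w = 1 & unitary (circulant4 z0 (w * z1) z2 (w * z3)).
  apply: circulant4_unitary_of_products u_def v_def _; rewrite ?z0a ?z1b ?z2c ?z3d //.
  by rewrite HJ; field.
exists (circulant4 z0 (w * z1) z2 (w * z3)); split => // i j.
suff -> : circ4 a b c d = map_mx sqmod (circulant4 z0 (w * z1) z2 (w * z3)).
  by rewrite mxE.
by rewrite map_circulant4 !sqmodM w1 !mul1r z0a z1b z2c z3d.
Qed.
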